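(* Let $d,m$ be positive integers, let $a<b$ be real numbers and $\epsilon>0$, and let $T:\mathrm{MR}_d\to\mathrm{MR}_m$ be an affine linear operator which sends $[a,b]$-rooted polynomials to real-rooted polynomials. Let $\mathcal{A}$ be the set of all $[a,b]$-rooted $f\in\mathrm{MR}_d$ with $\operatorname{tr}(f)=\epsilon$ (assumed nonempty), and consider the problem of maximizing the largest zero of $T(f)$ over $f\in\mathcal{A}$. Then this maximal zero is achieved for some $T(f)$ with $f\in\mathcal{A}$ having at most one distinct zero in $(a,b)$. Moreover, if the maximal zero above is achieved for some $T(f)$ where $f\in\mathcal{A}$ is $(a,b)$-rooted, then the maximal zero is also achieved for $T\big((t-\epsilon/d)^d\big)$.
   Context: $\mathrm{MR}_d$ denotes the affine space of all monic real univariate polynomials of degree $d$. For an interval $I\subseteq\mathbb{R}$, a polynomial is $I$-rooted if all its zeros lie in $I$. The trace $\operatorname{tr}(f)$ of a non-constant polynomial $f$ is the sum of its zeros counted with multiplicity. *)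

From HB Require Import structures.
From mathcomp Require Import all_boot all_order all_algebra.
From mathcomp Require Import reals.
Set Implicit Arguments. Unset Strict Implicit. Unset Printing Implicit Defensive.
Import Order.TTheory GRing.Theory Num.Theory.
Local Open Scope ring_scope.

Definition MR (R : realType) (d : nat) (p : {poly R}) : Prop :=
  p \is monic /\ size p = d.+1.

Definition rooted_in (R : realType) (I : interval R) (p : {poly R}) : Prop :=
  exists s : seq R, p = \prod_(x <- s) ('X - x%:P) /\ all (fun x => x \in I) s.

Definition real_rooted (R : realType) (p : {poly R}) : Prop :=
  exists s : seq R, p = \prod_(x <- s) ('X - x%:P).

Definition has_trace (R : realType) (p : {poly R}) (t : R) : Prop :=
  exists s : seq R, p = \prod_(x <- s) ('X - x%:P) /\ \sum_(x <- s) x = t.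

Definition affine_op (R : realType) (d m : nat) (T : {poly R} -> {poly R}) : Prop :=
  (forall f, MR d f -> MR m (T f)) /\
  (forall f g (l : R), MR d f -> MR d g ->
     T (l *: f + (1 - l) *: g) = l *: T f + (1 - l) *: T g).

Definition inA (R : realType) (d : nat) (a b eps : R) (f : {poly R}) : Prop :=
  MR d f /\ rooted_in `[a, b] f /\ has_trace f eps.

Definition max_attained_at (R : realType) (d : nat) (a b eps : R)
    (T : {poly R} -> {poly R}) (f0 : {poly R}) : Prop :=
  exists r : R, root (T f0) r /\
    forall f x, inA d a b eps f -> root (T f) x -> x <= r.

From HB Require Import structures.
From mathcomp Require Import all_boot all_order all_algebra.
From mathcomp Require Import reals boolp.
From mathcomp Require Import zify ring lra.
Import Order.TTheory GRing.Theory Num.Theory.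
Set Implicit Arguments. Unset Strict Implicit. Unset Printing Implicit Defensive.
Local Open Scope ring_scope.

(* Fix all zeros of an [a, b]-rooted f but two, u and v, and fix u + v: then f,
   hence T f, is affine in the product u v, and since a convex combination of
   two monic real-rooted polynomials is positive beyond the zeros of both, the
   largest zero of T f is quasiconvex in u v.  For interior zeros x1 < mu < xN,
   mu the mean of the interior zeros, x1 xN lies between the products obtained by
   pushing x1, xN apart until one hits the boundary and by replacing them with
   mu, x1 + xN - mu.  Both moves make progress, so every f is dominated by one of
   finitely many polynomials (t - a)^i (t - b)^j (t - c)^(d - i - j), the best of
   which is a maximizer.  At an (a, b)-rooted maximizer, push apart only slightly:
   if the pushed polynomial keeps the maximal zero r, affinity in u v puts r on
   the whole line, so the averaged one keeps it anyway; this ends at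
   (t - eps/d)^d. *)

Lemma exists_greatest (K : eqType) (r : K -> K -> Prop) (s : seq K) :
  (forall x y z, r x y -> r y z -> r x z) -> (forall x y, r x y \/ r y x) ->
  s != [::] -> exists2 g, g \in s & forall x, x \in s -> r x g.
Proof.
move=> r_trans r_total; elim: s => [//|x [|y s] IH] _.
  by exists x => [|z]; rewrite ?mem_seq1 => // /eqP ->; case: (r_total x x).
have [g gs Hg] := IH isT; case: (r_total x g) => [xg|gx].
  by exists g => [|z]; rewrite inE ?gs ?orbT // => /orP[/eqP ->|/Hg].
exists x => [|z]; first exact: mem_head.
by rewrite inE => /orP[/eqP ->|/Hg zg]; [case: (r_total x x) | exact: r_trans gx].
Qed.

Lemma exists_max_seq (disp : Order.disp_t) (T : orderType disp) (s : seq T) :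
  s != [::] -> exists2 y, y \in s & forall z, z \in s -> (z <= y)%O.
Proof.
case: s => [//|x s _]; exists (\big[Order.max/x]_(y <- x :: s) y).
  rewrite big_seq; apply: (big_rec (fun v => v \in x :: s)) => [|y v ys vs].
    exact: mem_head.
  by rewrite /Order.max; case: ifP.
by move=> z zs; exact: le_bigmax_seq.
Qed.

Definition poly_of_roots (R : nzRingType) (s : seq R) : {poly R} :=
  \prod_(x <- s) ('X - x%:P).

Lemma poly_of_roots_perm (R : comNzRingType) (s t : seq R) :
  perm_eq s t -> poly_of_roots s = poly_of_roots t.
Proof. exact: perm_big. Qed.

Lemma poly_of_roots_nseq (R : nzRingType) n (x : R) :
  poly_of_roots (nseq n x) = ('X - x%:P) ^+ n.
Proof. by rewrite /poly_of_roots big_nseq iter_mulr mulr1. Qed.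

Lemma poly_of_roots_pencil (R : comNzRingType) (u v : R) h :
  poly_of_roots [:: u, v & h] =
  ('X ^+ 2 - (u + v) *: 'X + (u * v)%:P) * poly_of_roots h.
Proof.
rewrite /poly_of_roots !big_cons mulrA -!mul_polyC polyCD polyCM; congr (_ * _).
ring.
Qed.

Lemma root_poly_of_roots (R : idomainType) (s : seq R) x :
  root (poly_of_roots s) x = (x \in s).
Proof. exact: root_prod_XsubC. Qed.

Lemma poly_of_roots_gt0 (R : numDomainType) (s : seq R) x :
  {in s, forall y, y < x} -> 0 < (poly_of_roots s).[x].
Proof.
move=> Hs; rewrite horner_prod big_seq prodr_gt0 // => y ys.
by rewrite hornerXsubC subr_gt0 Hs.
Qed.

(* Beyond the zeros of both, both polynomials are positive. *)
Lemma root_conv_poly_of_roots (R : realDomainType) (s t : seq R) l x :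
  0 <= l <= 1 -> root (l *: poly_of_roots s + (1 - l) *: poly_of_roots t) x ->
  (exists2 y, y \in s & x <= y) \/ (exists2 y, y \in t & x <= y).
Proof.
move=> /andP[l0 l1] hx.
case: (boolP (has (fun y => x <= y) s)) => [/hasP[y ys xy]|/hasPn Hs]; first by left; exists y.
case: (boolP (has (fun y => x <= y) t)) => [/hasP[y yt xy]|/hasPn Ht]; first by right; exists y.
have ps : 0 < (poly_of_roots s).[x] by apply: poly_of_roots_gt0 => y /Hs; rewrite -ltNge.
have pt : 0 < (poly_of_roots t).[x] by apply: poly_of_roots_gt0 => y /Ht; rewrite -ltNge.
move: hx; rewrite rootE hornerD !hornerZ => /eqP; nra.
Qed.

Lemma MR_poly_of_roots (R : realType) (s : seq R) : MR (size s) (poly_of_roots s).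
Proof. by split; [exact: monic_prod_XsubC | exact: size_prod_XsubC]. Qed.

Lemma rooted_in_roots (R : realType) (I : interval R) s :
  rooted_in I (poly_of_roots s) -> all (fun x => x \in I) s.
Proof.
move=> [t [est /allP tI]]; apply/allP => x xs; apply: tI.
by rewrite -root_prod_XsubC -est root_poly_of_roots.
Qed.

Lemma conv_coeff (R : realFieldType) (p1 p p2 : R) :
  p1 <= p <= p2 -> exists2 l, 0 <= l <= 1 & p = l * p1 + (1 - l) * p2.
Proof.
move=> /andP[p1p pp2]; have [e|ne] := eqVneq p1 p2; first by exists 1; rewrite ?ler01; lra.
have hp : 0 < p2 - p1 by rewrite subr_gt0 lt_neqAle ne (le_trans p1p pp2).
exists ((p2 - p) / (p2 - p1)); last by field; rewrite gt_eqF.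
by apply/andP; split; [apply: divr_ge0 | rewrite ler_pdivrMr // mul1r]; lra.
Qed.

Lemma sum_const_seq (R : nmodType) (T : Type) (s : seq T) (c : R) :
  \sum_(x <- s) c = c *+ size s.
Proof. by rewrite big_const_seq count_predT iter_addr addr0. Qed.

Lemma sum_nseq (R : pzSemiRingType) n (c : R) : \sum_(x <- nseq n c) x = n%:R * c.
Proof. by rewrite big_nseq iter_addr addr0 mulr_natl. Qed.

Lemma exists_lt_mean (R : realDomainType) (s : seq R) mu :
  \sum_(x <- s) x = (size s)%:R * mu -> has (fun x => x != mu) s ->
  exists2 x, x \in s & x < mu.
Proof.
move=> hsum /hasP[z zs zmu].
case: (boolP (has (fun x => x < mu) s)) => [/hasP[x xs xmu]|/hasPn Hge]; first by exists x.
have : \sum_(x <- s | x \in s) (x - mu) == 0.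
  by rewrite -big_seq sumrB hsum sum_const_seq mulr_natl subrr.
rewrite psumr_eq0 => [/allP/(_ z zs)|x xs]; first by rewrite zs subr_eq0 (negbTE zmu).
by rewrite subr_ge0 leNgt Hge.
Qed.

Lemma exists_gt_mean (R : realDomainType) (s : seq R) mu :
  \sum_(x <- s) x = (size s)%:R * mu -> has (fun x => x != mu) s ->
  exists2 x, x \in s & mu < x.
Proof.
move=> hsum hne.
have hsumN : \sum_(x <- map -%R s) x = (size (map -%R s))%:R * - mu.
  by rewrite big_map sumrN hsum size_map mulrN.
have hneN : has (fun x => x != - mu) (map -%R s).
  by rewrite has_map; apply: sub_has hne => x /=; rewrite eqr_opp.
have [_ /mapP[x xs ->]] := exists_lt_mean hsumN hneN.
by rewrite ltrN2 => mux; exists x.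
Qed.

Lemma perm_to_rem2 (T : eqType) (s : seq T) x y : x \in s -> y \in s -> y != x ->
  perm_eq s [:: x, y & rem y (rem x s)].
Proof.
move=> xs ys yx; apply: perm_trans (perm_to_rem xs) _.
by rewrite perm_cons; apply: perm_to_rem; rewrite rem_mem.
Qed.

Section LargestZero.

Variables (R : realType) (d m : nat) (a b eps : R) (T : {poly R} -> {poly R}).
Hypothesis T_affine : affine_op d m T.
Hypothesis T_real_rooted :
  forall f, MR d f -> rooted_in `[a, b] f -> real_rooted (T f).

Definition feasible (s : seq R) :=
  [/\ size s = d, all (fun x => x \in `[a, b]) s & \sum_(x <- s) x = eps].

Lemma feasible_inA s : feasible s -> inA d a b eps (poly_of_roots s).
Proof. by move=> [<- sI se]; split; [exact: MR_poly_of_roots | split; exists s]. Qed.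

Lemma inA_feasible f : inA d a b eps f -> exists2 s, feasible s & f = poly_of_roots s.
Proof.
move=> [[_ fsz] [fI [s [fs se]]]]; exists s => //; rewrite -/(poly_of_roots s) in fs.
split=> //; last by rewrite fs in fI; exact: rooted_in_roots.
by move: fsz; rewrite fs size_prod_XsubC => -[].
Qed.

Lemma feasible_perm s t : perm_eq s t -> feasible s -> feasible t.
Proof.
move=> st [hs sI se].
by split; [rewrite -(perm_size st) | rewrite -(perm_all _ st) | rewrite -(perm_big _ st)].
Qed.

Lemma feasible_move u v x y h : feasible [:: x, y & h] -> u + v = x + y ->
  u \in `[a, b] -> v \in `[a, b] -> feasible [:: u, v & h].
Proof.
move=> [hs /and3P[_ _ hI] he] uv uI vI; split=> //=; first by rewrite uI vI.
by rewrite -he !big_cons addrA uv -addrA.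
Qed.

Lemma T_real_roots s : size s = d -> all (fun x => x \in `[a, b]) s ->
  exists t, T (poly_of_roots s) = poly_of_roots t.
Proof. by move=> hs sI; apply: T_real_rooted; [rewrite -hs; exact: MR_poly_of_roots | exists s]. Qed.

Lemma T_affine_product u v u1 v1 u2 v2 h l : (size h).+2 = d ->
  u1 + v1 = u + v -> u2 + v2 = u + v -> u * v = l * (u1 * v1) + (1 - l) * (u2 * v2) ->
  T (poly_of_roots [:: u, v & h]) =
  l *: T (poly_of_roots [:: u1, v1 & h]) + (1 - l) *: T (poly_of_roots [:: u2, v2 & h]).
Proof.
move=> hs e1 e2 ep; have MRu (x y : R) : MR d (poly_of_roots [:: x, y & h]).
  by rewrite -hs; exact: MR_poly_of_roots.
rewrite -T_affine.2 // !poly_of_roots_pencil e1 e2 ep.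
rewrite -!mul_polyC !polyCD !polyCM polyCB polyC1; congr T; ring.
Qed.

Lemma root_T_between u v u1 v1 u2 v2 h x : (size h).+2 = d ->
  u1 + v1 = u + v -> u2 + v2 = u + v -> u1 * v1 <= u * v <= u2 * v2 ->
  all (fun y => y \in `[a, b]) [:: u1, v1 & h] ->
  all (fun y => y \in `[a, b]) [:: u2, v2 & h] ->
  root (T (poly_of_roots [:: u, v & h])) x ->
  (exists2 y, root (T (poly_of_roots [:: u1, v1 & h])) y & x <= y) \/
  (exists2 y, root (T (poly_of_roots [:: u2, v2 & h])) y & x <= y).
Proof.
move=> hs e1 e2 /conv_coeff[l l01 ep] I1 I2.
have [t1 Et1] := T_real_roots (s := [:: u1, v1 & h]) hs I1.
have [t2 Et2] := T_real_roots (s := [:: u2, v2 & h]) hs I2.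
rewrite (T_affine_product hs e1 e2 ep) Et1 Et2 => /(root_conv_poly_of_roots l01).
by case=> [[y yt1 xy]|[y yt2 xy]]; [left | right]; exists y; rewrite ?root_poly_of_roots.
Qed.

Lemma root_T_line u v u1 v1 u2 v2 h r : (size h).+2 = d ->
  u1 + v1 = u + v -> u2 + v2 = u + v -> u1 * v1 != u * v ->
  root (T (poly_of_roots [:: u1, v1 & h])) r ->
  root (T (poly_of_roots [:: u, v & h])) r ->
  root (T (poly_of_roots [:: u2, v2 & h])) r.
Proof.
move=> hs e1 e2 ne r1 r0.
have ep : u2 * v2 = ((u2 * v2 - u * v) / (u1 * v1 - u * v)) * (u1 * v1) +
    (1 - (u2 * v2 - u * v) / (u1 * v1 - u * v)) * (u * v).
  by field; rewrite subr_eq0.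
rewrite (T_affine_product hs _ _ ep) ?e1 ?e2 //.
by rewrite rootE hornerD !hornerZ (rootP r1) (rootP r0) !mulr0 addr0.
Qed.

Definition dominated (f g : {poly R}) :=
  forall x, root (T f) x -> exists2 y, root (T g) y & x <= y.

Lemma dominated_refl f : dominated f f.
Proof. by move=> x rx; exists x. Qed.

Lemma dominated_trans f g k : dominated f g -> dominated g k -> dominated f k.
Proof.
move=> fg gk x /fg[y /gk[z rz yz] xy]; exists z => //; exact: le_trans yz.
Qed.

Lemma dominated_total f g : dominated f g \/ dominated g f.
Proof.
case: (EM (dominated f g)) => [|nfg]; [by left | right] => y ry.
apply: contra_notP nfg => nyf x rx; apply: contra_notP nyf => nxg.
exists x => //; rewrite leNgt; apply/negP => xy; apply: nxg; exists y => //.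
exact: ltW.
Qed.

Lemma dominated_between u v u1 v1 u2 v2 h g : (size h).+2 = d ->
  u1 + v1 = u + v -> u2 + v2 = u + v -> u1 * v1 <= u * v <= u2 * v2 ->
  all (fun y => y \in `[a, b]) [:: u1, v1 & h] ->
  all (fun y => y \in `[a, b]) [:: u2, v2 & h] ->
  dominated (poly_of_roots [:: u1, v1 & h]) g ->
  dominated (poly_of_roots [:: u2, v2 & h]) g ->
  dominated (poly_of_roots [:: u, v & h]) g.
Proof.
move=> hs e1 e2 p I1 I2 D1 D2 x /(root_T_between hs e1 e2 p I1 I2).
by case=> -[y ry xy]; [have [z rz yz] := D1 y ry | have [z rz yz] := D2 y ry];
  exists z => //; exact: le_trans yz.
Qed.

Definition interior : pred R := [pred x | a < x < b].

Lemma interior_itv x : interior x -> x \in `[a, b].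
Proof. by rewrite in_itv /= => /andP[ax xb]; rewrite !ltW. Qed.

Definition imean (s : seq R) : R :=
  (\sum_(x <- s | interior x) x) / (count interior s)%:R.

Definition off_mean (s : seq R) : nat :=
  count [pred x | interior x && (x != imean s)] s.

Lemma imean_perm s t : perm_eq s t -> imean s = imean t.
Proof. by move=> st; rewrite /imean (perm_big _ st) (permP st). Qed.

Lemma off_mean_perm s t : perm_eq s t -> off_mean s = off_mean t.
Proof. by move=> st; rewrite /off_mean (imean_perm st) (permP st). Qed.

Lemma split_off_mean s : has [pred x | interior x && (x != imean s)] s ->
  exists x1 xN h, [/\ perm_eq s [:: x1, xN & h], a < x1, x1 < imean s,
                      imean s < xN & xN < b].
Proof.
move=> /hasP[z zs /andP[iz zmu]]; set t := filter interior s.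
have tz : z \in t by rewrite mem_filter iz.
have tsum : \sum_(x <- t) x = (size t)%:R * imean s.
  rewrite big_filter size_filter /imean mulrC divfK // pnatr_eq0 -lt0n -has_count.
  by apply/hasP; exists z.
have tne : has (fun x => x != imean s) t by apply/hasP; exists z.
have [x1 /[!mem_filter]/andP[/andP[a1 _] s1] x1mu] := exists_lt_mean tsum tne.
have [xN /[!mem_filter]/andP[/andP[_ bN] sN] muN] := exists_gt_mean tsum tne.
exists x1, xN, (rem xN (rem x1 s)); split=> //.
by apply: perm_to_rem2; rewrite // gt_eqF // (lt_trans x1mu muN).
Qed.

Lemma push_apart x y : a < x -> x < y -> y < b ->
  exists u v, [/\ u + v = x + y, u * v < x * y, u \in `[a, b], v \in `[a, b]
                  & ~~ interior u || ~~ interior v].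
Proof.
move=> ax xy yb; have ab : a <= b by lra.
rewrite /interior /=; have [le_xa|lt_yb] := lerP (x - a) (b - y).
  exists a, (x + y - a); rewrite !in_itv /= ltxx lexx ab.
  by split=> //; [ring | nra | apply/andP; split; lra].
exists (x + y - b), b; rewrite !in_itv /= ltxx lexx ab andbF orbT.
by split=> //; [ring | nra | apply/andP; split; lra].
Qed.

Lemma average_step x1 xN h : let mu := imean [:: x1, xN & h] in
  a < x1 -> x1 < mu -> mu < xN -> xN < b ->
  [/\ interior mu, interior (x1 + xN - mu),
      count interior [:: mu, x1 + xN - mu & h] = count interior [:: x1, xN & h] &
      (off_mean [:: mu, (x1 + xN - mu)%R & h] < off_mean [:: x1, xN & h])%N].
Proof.
move=> mu a1 x1mu muN Nb.
have imu : interior mu by apply/andP; split; lra.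
have iv : interior (x1 + xN - mu) by apply/andP; split; lra.
have i1 : interior x1 by apply/andP; split; lra.
have iN : interior xN by apply/andP; split; lra.
have hcount : count interior [:: mu, x1 + xN - mu & h] = count interior [:: x1, xN & h].
  by rewrite /= imu iv i1 iN.
have hmean : imean [:: mu, x1 + xN - mu & h] = mu.
  rewrite /imean hcount !big_cons imu iv -/mu /mu /imean !big_cons i1 iN.
  by congr (_ / _); ring.
split=> //; rewrite /off_mean hmean -/mu /= imu iv i1 iN eqxx.
by rewrite (lt_eqF x1mu) (gt_eqF muN) /= add0n ltnS leq_add2r leq_b1.
Qed.

Hypothesis ltab : a < b.

Lemma perm_three_values s c : all (fun x => x \in `[a, b]) s ->
  {in s, forall x, interior x -> x = c} ->
  perm_eq s (nseq (count_mem a s) a ++ nseq (count_mem b s) b ++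
             nseq (count interior s) c).
Proof.
elim: s => [//|x s IH] /= /andP[xI sI] Hc.
have {}IH := IH sI (fun y ys => Hc y (mem_behead (s := x :: s) ys)).
have [->|neqa] := eqVneq x a.
  by rewrite (lt_eqF ltab) /interior /= ltxx /= add0n perm_cons.
have [->|neqb] := eqVneq x b.
  rewrite ?(gt_eqF ltab) {1}/interior /= ltxx andbF /= ?add0n.
  by rewrite perm_sym -[b :: nseq _ _ ++ _]cat1s perm_catCA /= perm_cons perm_sym.
have ix : interior x.
  by move: xI; rewrite in_itv /interior /= !lt_neqAle (eq_sym a) neqa neqb.
rewrite /= ix (Hc x (mem_head _ _) ix) !add0n add1n /=.
by rewrite perm_sym catA -[c :: nseq _ _]cat1s perm_catCA /= -catA perm_cons perm_sym.
Qed.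

(* When [i + j = d] the division is by 0, but then no zero equals [mid_root i j]. *)
Definition mid_root (i j : nat) : R :=
  (eps - i%:R * a - j%:R * b) / (d - i - j)%:R.

Definition candidate (i j : nat) : {poly R} :=
  poly_of_roots (nseq i a ++ nseq j b ++ nseq (d - i - j) (mid_root i j)).

Definition candidates : seq {poly R} :=
  [seq candidate i j | i <- iota 0 d.+1, j <- iota 0 d.+1].

Lemma candidate_of_one_interior_value s : feasible s ->
  {in s &, forall x y, interior x -> interior y -> x = y} ->
  poly_of_roots s \in candidates.
Proof.
move=> [hs sI se] Hone.
set i := count_mem a s; set j := count_mem b s; set n := count interior s.
have size_s c (hp : perm_eq s (nseq i a ++ nseq j b ++ nseq n c)) : n = (d - i - j)%N.
  by move: (perm_size hp); rewrite hs !size_cat !size_nseq; lia.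
have Hc : {in s, forall x, interior x -> x = mid_root i j}.
  move=> x xs ix; have hp := perm_three_values sI (fun y ys iy => Hone y x ys xs iy ix).
  have n0 : (0 < n)%N by rewrite -has_count; apply/hasP; exists x.
  rewrite /mid_root -(size_s x hp) -se (perm_big _ hp) !big_cat /= !sum_nseq.
  by field; rewrite pnatr_eq0 -lt0n.
have hp := perm_three_values sI Hc.
rewrite (poly_of_roots_perm hp) -/i -/j -/n (size_s _ hp).
by apply: allpairs_f; rewrite mem_iota ltnS /= -hs count_size.
Qed.

Lemma candidate_one_interior_root g x y : g \in candidates ->
  interior x -> interior y -> root g x -> root g y -> x = y.
Proof.
move=> /allpairsP[[i j] [_ _ ->]] ix iy.
have mid z : interior z -> root (candidate i j) z -> z = mid_root i j.
  rewrite /interior /= root_poly_of_roots !mem_cat !mem_nseq => /andP[az zb].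
  by rewrite (gt_eqF az) (lt_eqF zb) !andbF /= => /andP[_ /eqP].
by move=> /(mid x ix) -> /(mid y iy) ->.
Qed.

Definition potential (s : seq R) : nat := (count interior s * d.+1 + off_mean s)%N.

Lemma potential_perm s t : perm_eq s t -> potential s = potential t.
Proof. by move=> st; rewrite /potential (off_mean_perm st) (permP st). Qed.

Lemma potential_lt_count s t : size s = d -> (count interior s < count interior t)%N ->
  (potential s < potential t)%N.
Proof.
move=> hs lt_st; have := count_size [pred x | interior x && (x != imean s)] s.
by rewrite /potential /off_mean hs; nia.
Qed.

Lemma dominated_by_candidate s : feasible s ->
  exists g, [/\ g \in candidates, inA d a b eps g & dominated (poly_of_roots s) g].
Proof.
move=> hs; have [n] := ubnP (potential s); elim: n s hs => [//|n IH] s hs hpot.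
case: (boolP (has [pred x | interior x && (x != imean s)] s)) => [hoff|/hasPn hnone].
  have [x1 [xN [h [hp a1 x1mu muN Nb]]]] := split_off_mean hoff.
  rewrite (imean_perm hp) in x1mu muN; set mu := imean _ in x1mu muN.
  have hs0 := feasible_perm hp hs; have [hsz _ _] := hs0.
  have {}hpot : (potential [:: x1, xN & h] <= n)%N by rewrite -(potential_perm hp).
  rewrite (poly_of_roots_perm hp).
  have [i_mu i_v hcount hoff2] := average_step a1 x1mu muN Nb.
  have [u [v [uv puv uI vI uvb]]] := push_apart a1 (lt_trans x1mu muN) Nb.
  have hs1 := feasible_move hs0 uv uI vI.
  have hs2 : feasible [:: mu, x1 + xN - mu & h].
    by apply: feasible_move hs0 _ (interior_itv i_mu) (interior_itv i_v); ring.
  have [g1 [g1c g1A D1]] : exists g, [/\ g \in candidates, inA d a b eps g &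
      dominated (poly_of_roots [:: u, v & h]) g].
    apply: IH hs1 (leq_trans _ hpot); apply: potential_lt_count => //=.
    have ai1 : interior x1 by apply/andP; split; lra.
    have aiN : interior xN by apply/andP; split; lra.
    by rewrite ai1 aiN; case/orP: uvb => /negbTE ->; case: (interior _).
  have [g2 [g2c g2A D2]] : exists g, [/\ g \in candidates, inA d a b eps g &
      dominated (poly_of_roots [:: mu, x1 + xN - mu & h]) g].
    by apply: IH hs2 (leq_trans _ hpot); rewrite /potential hcount ltn_add2l.
  have [_ I1 _] := hs1; have [_ I2 _] := hs2.
  have p : u * v <= x1 * xN <= mu * (x1 + xN - mu) by apply/andP; split; nra.
  have e2 : mu + (x1 + xN - mu) = x1 + xN by ring.
  have dom k : dominated (poly_of_roots [:: u, v & h]) k ->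
      dominated (poly_of_roots [:: mu, x1 + xN - mu & h]) k ->
      dominated (poly_of_roots [:: x1, xN & h]) k.
    exact: dominated_between hsz uv e2 p I1 I2.
  case: (dominated_total g1 g2) => D; [exists g2 | exists g1]; split=> //; apply: dom => //.
    exact: dominated_trans D1 D.
  exact: dominated_trans D2 D.
exists (poly_of_roots s); split; [|exact: feasible_inA|exact: dominated_refl].
apply: candidate_of_one_interior_value => // x y xs ys ix iy.
by move: (hnone x xs) (hnone y ys); rewrite /= ix iy !negbK => /eqP -> /eqP ->.
Qed.

Lemma imean_all_interior s : all interior s ->
  imean s = (\sum_(x <- s) x) / (size s)%:R.
Proof.
move=> hall; rewrite /imean -big_filter (all_filterP hall).
by move: hall; rewrite all_count => /eqP ->.
Qed.

Lemma max_zero_at_mean r : (forall f x, inA d a b eps f -> root (T f) x -> x <= r) ->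
  forall s, feasible s -> all interior s -> root (T (poly_of_roots s)) r ->
  root (T (('X - (eps / d%:R)%:P) ^+ d)) r.
Proof.
move=> Hmax s hs; have [n] := ubnP (off_mean s).
elim: n s hs => [//|n IH] s hs hoff_n s_int r_s.
case: (boolP (has [pred x | interior x && (x != imean s)] s)) => [hoff|/hasPn hnone].
  have [x1 [xN [h [hp a1 x1mu muN Nb]]]] := split_off_mean hoff.
  rewrite (imean_perm hp) in x1mu muN; set mu := imean _ in x1mu muN.
  have hs0 := feasible_perm hp hs; have [hsz _ _] := hs0.
  rewrite (off_mean_perm hp) in hoff_n; rewrite (perm_all _ hp) in s_int.
  rewrite (poly_of_roots_perm hp) in r_s.
  have [i_mu i_v _ hoff2] := average_step a1 x1mu muN Nb.
  have [u [v [uv puv uI vI _]]] := push_apart a1 (lt_trans x1mu muN) Nb.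
  have hs1 := feasible_move hs0 uv uI vI.
  have hs2 : feasible [:: mu, x1 + xN - mu & h].
    by apply: feasible_move hs0 _ (interior_itv i_mu) (interior_itv i_v); ring.
  have [_ I1 _] := hs1; have [_ I2 _] := hs2.
  have p : u * v <= x1 * xN <= mu * (x1 + xN - mu) by apply/andP; split; nra.
  have e2 : mu + (x1 + xN - mu) = x1 + xN by ring.
  have max_at k y : feasible k -> root (T (poly_of_roots k)) y -> r <= y -> y = r.
    by move=> /feasible_inA kA ry ry'; apply/eqP; rewrite eq_le ry' (Hmax _ _ kA ry).
  have r_avg : root (T (poly_of_roots [:: mu, x1 + xN - mu & h])) r.
    case: (root_T_between hsz uv e2 p I1 I2 r_s) => [[y ry ry'] | [y ry ry']].
      have ery := max_at _ _ hs1 ry ry'; rewrite ery in ry.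
      by apply: root_T_line hsz uv e2 (negbT (lt_eqF puv)) ry r_s.
    by rewrite -(max_at _ _ hs2 ry ry').
  apply: IH hs2 (leq_trans hoff2 _) _ r_avg => //.
  by move: s_int => /= /and3P[_ _ ->]; rewrite i_mu i_v.
have [hsz _ hsum] := hs.
have s_mean : s = nseq d (eps / d%:R).
  rewrite -hsz -hsum -imean_all_interior //; apply/all_pred1P/allP => x xs.
  by move: (hnone x xs); rewrite /= (allP s_int x xs) negbK.
by rewrite s_mean poly_of_roots_nseq in r_s.
Qed.

Lemma exists_best_candidate : (exists f, inA d a b eps f) ->
  exists g, [/\ g \in candidates, inA d a b eps g &
                forall f, inA d a b eps f -> dominated f g].
Proof.
move=> [f /inA_feasible[s hs _]]; have [g0 [g0c g0A _]] := dominated_by_candidate hs.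
set good := [seq g <- candidates | `[< inA d a b eps g >]].
have goodP g : (g \in good) = (g \in candidates) && `[< inA d a b eps g >].
  by rewrite mem_filter andbC.
have [|g /[!goodP]/andP[gc /asboolP gA] gbest] :=
    exists_greatest dominated_trans dominated_total (s := good).
  have : g0 \in good by rewrite goodP g0c; apply/asboolP.
  by apply: contraTneq => ->.
exists g; split=> // k /inA_feasible[t ht ->].
have [g1 [g1c g1A D1]] := dominated_by_candidate ht.
by apply: dominated_trans D1 (gbest _ _); rewrite goodP g1c; apply/asboolP.
Qed.

Hypothesis m_gt0 : (0 < m)%N.

Lemma max_attained_at_greatest g : inA d a b eps g ->
  (forall f, inA d a b eps f -> dominated f g) -> max_attained_at d a b eps T g.
Proof.
move=> /[dup] gA /inA_feasible[s [hs sI _] gs] gbest.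
have [t Tg] := T_real_roots hs sI; rewrite -gs in Tg.
have [_ sz] := T_affine.1 _ gA.1; rewrite Tg size_prod_XsubC in sz.
have [|y yt ymax] := exists_max_seq (s := t).
  by apply: contraTneq m_gt0 => t0; rewrite -ltnS -sz t0.
exists y; split; first by rewrite Tg root_poly_of_roots.
move=> f x /gbest fg /fg[z]; rewrite Tg root_poly_of_roots => /ymax zy xz.
exact: le_trans zy.
Qed.

End LargestZero.

Unset Implicit Arguments.

Theorem lemma6p9 (R : realType) (d m : nat) (a b eps : R)
    (T : {poly R} -> {poly R}) :
  (0 < d)%N -> (0 < m)%N -> a < b -> 0 < eps ->
  affine_op d m T ->
  (forall f, MR d f -> rooted_in `[a, b] f -> real_rooted (T f)) ->
  (exists f, inA d a b eps f) ->
  (exists f0, inA d a b eps f0 /\ max_attained_at d a b eps T f0 /\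
     (forall x y, a < x < b -> a < y < b -> root f0 x -> root f0 y -> x = y))
  /\
  ((exists f1, inA d a b eps f1 /\ rooted_in `]a, b[ f1 /\
               max_attained_at d a b eps T f1) ->
   max_attained_at d a b eps T (('X - (eps / d%:R)%:P) ^+ d)).
Proof.
move=> _ m_gt0 ltab _ T_affine T_real_rooted Hex; split.
  have [g [gc gA gbest]] := exists_best_candidate T_affine T_real_rooted ltab Hex.
  exists g; split; [exact: gA | split].
    exact (max_attained_at_greatest T_affine T_real_rooted m_gt0 gA gbest).
  by move=> x y; apply: candidate_one_interior_root gc.
move=> [f1 [f1A [f1int [r [r_f1 Hmax]]]]]; exists r; split=> //.
have [s hs f1s] := inA_feasible f1A.
apply: (max_zero_at_mean T_affine T_real_rooted Hmax hs); last by rewrite -f1s.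
by rewrite f1s in f1int; apply: sub_all (rooted_in_roots f1int) => x; rewrite in_itv.
Qed.
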